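(* Let $k\geq 8$ and $3k\leq n\leq 4k$ be integers, and let $h(n,k)=\binom{n-1}{k-1}-\binom{n-k-1}{k-1}+1$. Then \[ \binom{n}{k-2}+\frac{h(n,k)^2}{\binom{n}{k-2}}>2\binom{n-1}{k-1}. \] *)

From mathcomp Require Import all_boot all_order all_algebra.
Set Implicit Arguments. Unset Strict Implicit. Unset Printing Implicit Defensive.
Import Order.TTheory GRing.Theory Num.Theory.
Local Open Scope ring_scope.

Definition h (n k : nat) : rat :=
  ('C(n.-1, k.-1))%:R - ('C((n - k).-1, k.-1))%:R + 1.

From mathcomp Require Import all_boot all_order all_algebra.
From mathcomp Require Import ring lra zify.
Set Implicit Arguments. Unset Strict Implicit. Unset Printing Implicit Defensive.
Import Order.TTheory GRing.Theory Num.Theory.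
Local Open Scope ring_scope.

(* Write A = C(n-1, k-1), B = C(n, k-2) and C = C(n-k-1, k-1), so that h = A - C + 1.
   Multiplying by B, the claim is B^2 + h^2 > 2AB, and
   B^2 + h^2 - 2AB = (A - B)^2 - 2AC + 2A + (C - 1)^2, so 2AC <= (A - B)^2 suffices.
   Now B / A = n(k-1) / ((n-k+2)(n-k+1)) exactly, while comparing falling
   factorials factor by factor gives C / A <= ((n-k-1) / (n-1))^(k-1); this leaves
   an explicit inequality in n and k.  For k >= 14 it follows from the crude bounds
   B / A <= 3/4, (n-k-1) / (n-1) <= 3/4 and (3/4)^13 <= 1/32; the 69 pairs (n, k)
   with 8 <= k <= 13 are checked one by one. *)

Lemma ffact_mul_exp_le a b r : (a <= b)%N -> (a ^_ r * b ^ r <= b ^_ r * a ^ r)%N.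
Proof.
move=> le_ab; have expE m : (m ^ r = \prod_(i < r) m)%N.
  by rewrite prod_nat_const card_ord.
rewrite !ffact_prod !expE -!big_split /=.
by apply: leq_prod => i _; nia.
Qed.

Lemma bin_mul_exp_le a b r : (a <= b)%N -> ('C(a, r) * b ^ r <= 'C(b, r) * a ^ r)%N.
Proof.
move=> le_ab; rewrite -(leq_pmul2r (fact_gt0 r)) mulnAC [X in (_ <= X)%N]mulnAC.
by rewrite !bin_ffact ffact_mul_exp_le.
Qed.

Lemma bin_mul_sub2 n m :
  ('C(n, m) * ((n - m) * (n - m.+1)) = 'C(n.-1, m.+1) * (n * m.+1))%N.
Proof.
rewrite mulnA [(_ * (n - m))%N]mulnC -mul_bin_left -mulnA [(_ * (n - _))%N]mulnC.
by rewrite -mul_bin_down; ring.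
Qed.

Lemma natr_sub_pred (R : pzRingType) n k :
  (k < n)%N -> (n - k).-1%:R = n%:R - k%:R - 1 :> R.
Proof. by move=> lt_kn; rewrite -subnS natrB // -natr1 opprD addrA. Qed.

Lemma natr_pred (R : pzRingType) n : (0 < n)%N -> n.-1%:R = n%:R - 1 :> R.
Proof. by move=> n_gt0; rewrite -subn1 natrB. Qed.

Lemma bin_sub_pred_ratio_le (R : numDomainType) n k : (k < n)%N ->
  'C((n - k).-1, k.-1)%:R * (n%:R - 1) ^+ k.-1
    <= 'C(n.-1, k.-1)%:R * (n%:R - k%:R - 1) ^+ k.-1 :> R.
Proof.
move=> lt_kn; rewrite -natr_sub_pred // -natr_pred; last lia.
by rewrite -!natrX -!natrM ler_nat bin_mul_exp_le //; lia.
Qed.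

Lemma bin_sub2_ratio (R : pzRingType) n k : (2 <= k <= n)%N ->
  'C(n, k - 2)%:R * ((n%:R - k%:R + 2) * (n%:R - k%:R + 1))
    = 'C(n.-1, k.-1)%:R * (n%:R * (k%:R - 1)) :> R.
Proof.
case/andP=> k_ge2 le_kn; have := bin_mul_sub2 n (k - 2).
have -> : (n - (k - 2) = n - k + 2)%N by lia.
have -> : (n - (k - 2).+1 = n - k + 1)%N by lia.
have -> : (k - 2).+1 = k.-1 by lia.
move/(congr1 (GRing.natmul (1 : R))); rewrite !natrM !natrD natrB //.
by rewrite natr_pred; last lia.
Qed.

Lemma le_sqr_sub_of_ratios (R : realDomainType) (A B C a b D N : R) (r : nat) :
  0 <= A -> 0 < b -> 0 < D ->
  C * b ^+ r <= A * a ^+ r -> B * D = A * N ->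
  2 * a ^+ r * D ^+ 2 <= (D - N) ^+ 2 * b ^+ r ->
  2 * A * C <= (A - B) ^+ 2.
Proof.
move=> A_ge0 b_gt0 D_gt0 leC eqB cond.
have br_gt0 : 0 < b ^+ r by rewrite exprn_gt0.
rewrite -(ler_pM2r (mulr_gt0 br_gt0 (exprn_gt0 2 D_gt0))).
have -> : (A - B) ^+ 2 * (b ^+ r * D ^+ 2) = A ^+ 2 * ((D - N) ^+ 2 * b ^+ r).
  by rewrite mulrCA -exprMn mulrBl eqB -mulrBr exprMn; ring.
have AD_ge0 : 0 <= 2 * A * D ^+ 2 by nra.
have := ler_wpM2l AD_ge0 leC; have := ler_wpM2l (sqr_ge0 A) cond.
lra.
Qed.

Lemma mul2_lt_sqr_add_of_le (R : realDomainType) (A B C : R) :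
  0 < A -> 2 * A * C <= (A - B) ^+ 2 -> 2 * A * B < B ^+ 2 + (A - C + 1) ^+ 2.
Proof.
move=> A_gt0 le_AC; have := sqr_ge0 (C - 1); lra.
Qed.

(* 2 x <= (1 - y)^2 with denominators cleared, where y = n(k-1)/D = B/A and
   x = ((n-k-1)/(n-1))^(k-1) >= C/A. *)
Definition ratio_condition (n k : nat) : Prop :=
  let D : rat := (n%:R - k%:R + 2) * (n%:R - k%:R + 1) in
  2 * (n%:R - k%:R - 1) ^+ k.-1 * D ^+ 2
    <= (D - n%:R * (k%:R - 1)) ^+ 2 * (n%:R - 1) ^+ k.-1.

Lemma forall_in_iota (P : nat -> Prop) a m :
  foldr (fun i Q => P i /\ Q) True (iota a m) -> forall i, (a <= i < a + m)%N -> P i.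
Proof.
elim: m a => [|m IHm] a /=; first by move=> _ i; rewrite addn0; case: ltngtP.
case=> Pa Pnext i /andP[]; rewrite leq_eqVlt => /orP[/eqP <- // | lt_ai lt_i].
by apply: (IHm a.+1 Pnext); rewrite lt_ai addSnnS.
Qed.

Lemma ratio_condition_small n k :
  (8 <= k <= 13)%N -> (3 * k <= n <= 4 * k)%N -> ratio_condition n k.
Proof.
move=> k_range n_range.
have {n_range} : (3 * k <= n < 3 * k + k.+1)%N by rewrite addnS ltnS -mulSnr.
move: n; move: k k_range; apply: (@forall_in_iota _ 8 6) => /=.
by do ![exact: I | apply: conj | rewrite /ratio_condition; lra
       | apply: forall_in_iota => /=].
Qed.

Lemma ratio_condition_large n k :
  (14 <= k)%N -> (3 * k <= n <= 4 * k)%N -> ratio_condition n k.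
Proof.
move=> k_ge14 /andP[n_ge n_le]; rewrite /ratio_condition.
have k_ge : 14 <= k%:R :> rat by rewrite (ler_nat rat 14 k).
have n_ge' : 3 * k%:R <= n%:R :> rat by rewrite -natrM ler_nat.
have n_le' : n%:R <= 4 * k%:R :> rat by rewrite -natrM ler_nat.
set a := n%:R - k%:R - 1; set b := n%:R - 1; set r := k.-1.
set D := (n%:R - k%:R + 2) * _; set N := n%:R * _.
have a_ge0 : 0 <= a by rewrite /a; lra.
have le_ab : 4 * a <= 3 * b by rewrite /a /b; lra.
have le_ND : 4 * N <= 3 * D by rewrite /N /D; nra.
have N_ge0 : 0 <= N by rewrite /N; nra.
have pow_le : 32 * a ^+ r <= b ^+ r.
  have le_P : a ^+ r <= (3 / 4) ^+ r * b ^+ r.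
    by rewrite -exprMn lerXn2r ?nnegrE //; lra.
  have le_X : (3 / 4 : rat) ^+ r <= 1 / 32.
    by apply: le_trans (_ : (3 / 4) ^+ 13 <= _); [rewrite ler_wiXn2l //; lia | lra].
  have b_ge0 : 0 <= b by rewrite /b; lra.
  have := ler_wpM2r (exprn_ge0 r b_ge0) le_X.
  lra.
have le_sqr : D ^+ 2 <= 16 * (D - N) ^+ 2 by nra.
have := ler_wpM2l (exprn_ge0 r a_ge0) le_sqr.
have := ler_wpM2l (sqr_ge0 (D - N)) pow_le.
lra.
Qed.

Theorem lemma2p10 (n k : nat) (hk : (8 <= k)%N) (hn1 : (3 * k <= n)%N)
  (hn2 : (n <= 4 * k)%N) :
  ('C(n, k - 2))%:R + h n k ^+ 2 / ('C(n, k - 2))%:R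
    > 2 * ('C(n.-1, k.-1))%:R :> rat.
Proof.
have cond : ratio_condition n k.
  have n_range : (3 * k <= n <= 4 * k)%N by rewrite hn1 hn2.
  have [k_le13 | k_gt13] := leqP k 13.
  - by apply: ratio_condition_small; rewrite ?hk.
  - exact: ratio_condition_large.
have A_gt0 : 0 < 'C(n.-1, k.-1)%:R :> rat by rewrite ltr0n bin_gt0; lia.
have B_gt0 : 0 < 'C(n, k - 2)%:R :> rat by rewrite ltr0n bin_gt0; lia.
have k_ge : 8 <= k%:R :> rat by rewrite (ler_nat rat 8 k).
have n_ge : 3 * k%:R <= n%:R :> rat by rewrite -natrM ler_nat.
have gap := le_sqr_sub_of_ratios (ltW A_gt0) _ _
  (bin_sub_pred_ratio_le _ _) (bin_sub2_ratio _ _) cond.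
rewrite -(ltr_pM2r B_gt0) [X in _ < X]mulrDl divfK ?gt_eqF // -expr2 /h.
by apply: mul2_lt_sqr_add_of_le => //; apply: gap; first [lia | nra].
Qed.
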